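(* Let $G$ be a finite group having at most $5$ irrational conjugacy classes. Then $|\mathrm{cl}_{\mathbb{Q}}(G)| = |\mathrm{Irr}_{\mathbb{Q}}(G)|$.
   Context: For a finite group $G$, a conjugacy class $K$ of $G$ is called rational if $\chi(K) \in \mathbb{Q}$ for every $\chi \in \mathrm{Irr}(G)$ (the set of complex irreducible characters of $G$), and irrational otherwise. $\mathrm{cl}_{\mathbb{Q}}(G)$ denotes the set of rational conjugacy classes of $G$. An irreducible character $\chi$ is rational if $\mathbb{Q}(\chi) = \mathbb{Q}$, where $\mathbb{Q}(\chi)$ is the field generated over $\mathbb{Q}$ by the values $\chi(g)$, $g \in G$; $\mathrm{Irr}_{\mathbb{Q}}(G)$ denotes the set of rational irreducible characters of $G$. *)

From mathcomp Require Import all_boot all_order all_algebra all_fingroup all_solvable all_field all_character.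
Set Implicit Arguments. Unset Strict Implicit. Unset Printing Implicit Defensive.
Import GRing.Theory Num.Theory.
Local Open Scope ring_scope.

(* A conjugacy class K of G is rational if every irreducible character of G
   takes a rational value on K (class functions are constant on K, so we
   evaluate at the representative repr K). *)
Definition rational_class (gT : finGroupType) (G : {group gT}) (K : {set gT}) : bool :=
  [forall i : Iirr G, 'chi[G]_i (repr K) \in Crat].

Definition rational_irr (gT : finGroupType) (G : {group gT}) (i : Iirr G) : bool :=
  [forall g in G, 'chi[G]_i g \in Crat].

Definition rat_classes (gT : finGroupType) (G : {group gT}) : {set {set gT}} :=
  [set K in classes G | rational_class G K].

Definition irrat_classes (gT : finGroupType) (G : {group gT}) : {set {set gT}} :=
  [set K in classes G | ~~ rational_class G K].

Definition rat_irr (gT : finGroupType) (G : {group gT}) : {set Iirr G} :=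
  [set i : Iirr G | rational_irr i].

From mathcomp Require Import all_boot all_order all_algebra all_fingroup all_solvable.
From mathcomp Require Import all_field all_character.
Set Implicit Arguments. Unset Strict Implicit. Unset Printing Implicit Defensive.
Import GRing.Theory Num.Theory.
Local Open Scope ring_scope.

(* An exponent k coprime to |G| acts on Irr(G) by chi |-> (g |-> chi (g ^+ k)) and on the
   conjugacy classes by K |-> K ^+ k; this is the action of Gal(Q_|G| / Q), so the rational
   characters and classes are its common fixed points, while by Brauer's permutation lemma a
   single k fixes as many characters as classes.  It therefore suffices to find one k fixing
   no irrational class and no irrational character.
   If k moves every irrational class, a class function that is also k-invariant is constant on
   at most two sets of irrational classes, since each such level set contains a class K and
   K ^+ k != K, and there are at most five irrational classes.  Applied to Galois stabilisers of
   classes this produces a k moving every irrational class.  Applied to differences chi - chi' of Galois conjugate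
   characters, with chi fixed by k, it shows that chi has only one conjugate chi' != chi and that
   chi - chi' only takes values +-c on irrational elements, where |c|^2 = 2|G| / #irrational
   elements and c is real or purely imaginary.  Consequently, among three such characters two
   have the same Galois stabiliser, which is incompatible with characters fixed by k, h and kh,
   with h moving the first one. *)

Section GaloisPowers.
Variables (gT : finGroupType) (G : {group gT}).
Local Notation n := #|G|.

Definition aut_pow (u : {rmorphism algC -> algC}) k :=
  forall z : algC, z ^+ n = 1 -> u z = z ^+ k.

Lemma char_aut_pow u k (chi : 'CF(G)) g : aut_pow u k -> chi \is a character -> g \in G ->
  u (chi g) = chi (g ^+ k)%g.
Proof.
move=> Uk Nchi Gg; have sgG : <[g]>%G \subset G by rewrite cycle_subG.
rewrite -(cfResE _ sgG (cycle_id g)) -(cfResE _ sgG (mem_cycle g k)).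
have [r ->] := char_sum_irr (cfRes_char <[g]>%G Nchi).
rewrite !sum_cfunE rmorph_sum; apply: eq_bigr => j _.
have lin_j : 'chi[<[g]>%G]_j \is a linear_char by rewrite irr_cyclic_lin ?cycle_cyclic.
by rewrite lin_charX ?cycle_id // Uk // -lin_charX ?cycle_id // expg_cardG ?lin_char1.
Qed.

Lemma aut_pow_exists u : exists2 k : 'I_n, coprime k n & aut_pow u k.
Proof.
have [z prim_z] := C_prim_root_exists (cardG_gt0 G).
have prim_uz : n.-primitive_root (u z) by rewrite fmorph_primitive_root.
have [k Dk] := prim_rootP prim_z (prim_expr_order prim_uz).
exists k; first by rewrite -(prim_root_exp_coprime k prim_z) -Dk.
by move=> w /(prim_rootP prim_z)[j ->]; rewrite rmorphXn /= Dk -!exprM mulnC.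
Qed.

Definition pow_Iirr k (i : Iirr G) : Iirr G :=
  if @idP (coprime k n) is ReflectT ck then aut_Iirr (sval (Qn_aut_exists ck)) i else i.

Lemma pow_IirrE k i g : coprime k n -> g \in G -> 'chi_(pow_Iirr k i) g = 'chi_i (g ^+ k)%g.
Proof.
rewrite /pow_Iirr => ck Gg; case: {-}_ / idP => [ck'|]; last by rewrite ck.
case: (Qn_aut_exists ck') => u Uk /=.
by rewrite aut_IirrE cfunE (char_aut_pow Uk (irr_char i) Gg).
Qed.

Lemma pow_Iirr_inj k : coprime k n -> injective (pow_Iirr k).
Proof.
by rewrite /pow_Iirr => ck; case: {-}_ / idP => [ck'|]; [apply: aut_Iirr_inj | rewrite ck].
Qed.

Lemma pow_IirrM k l i : coprime k n -> coprime l n ->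
  pow_Iirr (k * l)%N i = pow_Iirr k (pow_Iirr l i).
Proof.
move=> ck cl; apply: irr_inj; apply/cfun_inP => g Gg.
by rewrite !pow_IirrE ?coprimeMl ?ck ?groupX // expgM.
Qed.

Lemma pow_Iirr0 k : coprime k n -> pow_Iirr k 0 = 0.
Proof.
move=> ck; apply: irr_inj; apply/cfun_inP => g Gg.
by rewrite pow_IirrE // irr0 !cfun1E groupX ?Gg.
Qed.

Lemma rational_irr0 : rational_irr (0 : Iirr G).
Proof. by apply/forall_inP => g Gg; rewrite irr0 cfun1E Gg rpred_nat. Qed.

Lemma cfun_class (f : 'CF(G)) x y : y \in (x ^: G)%g -> f y = f x.
Proof. by case/imsetP=> z Gz ->; rewrite cfunJ. Qed.

Lemma sum_cfun_eq0 (f : 'CF(G)) : '[f, 1] = 0 -> \sum_(g in G) f g = 0.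
Proof.
rewrite cfdotE => /eqP; rewrite mulf_eq0 invr_eq0 pnatr_eq0 eqn0Ngt cardG_gt0 /= => /eqP E.
rewrite -[RHS]E.
by apply: eq_bigr => g Gg; rewrite cfun1E Gg conjC1 mulr1.
Qed.

Definition fixes_irr k i := pow_Iirr k i == i.

Lemma fixes_irrMl k l i : coprime k n -> coprime l n -> fixes_irr k i ->
  fixes_irr (l * k)%N i = fixes_irr l i.
Proof. by move=> ck cl /eqP fik; rewrite /fixes_irr pow_IirrM // fik. Qed.

Lemma fixes_irrP k i : coprime k n ->
  reflect {in G, forall g, 'chi[G]_i (g ^+ k)%g = 'chi_i g} (fixes_irr k i).
Proof.
move=> ck; apply: (iffP eqP) => [Di g Gg | fix_i]; first by rewrite -pow_IirrE ?Di.
by apply: irr_inj; apply/cfun_inP => g Gg; rewrite pow_IirrE ?fix_i.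
Qed.

Lemma Crat_irr_pow i g : g \in G ->
  ('chi_i g \in Crat) = [forall k : 'I_n, coprime k n ==> ('chi[G]_i (g ^+ k)%g == 'chi_i g)].
Proof.
move=> Gg; apply/idP/forallP => [Qchi k | fix_g].
  apply/implyP => ck.
  by have [u Uk] := Qn_aut_exists ck; rewrite -(char_aut_pow Uk (irr_char i) Gg) aut_Crat.
have [Qn galQn [QnC gQnC [_ _ QnG]]] := group_num_field_exists G.
have [a Da] := QnG _ G _ (irr_char i) g (order_dvdG Gg).
suff : a \in fixedField ('Gal({:Qn} / 1))%g.
  rewrite (galois_fixedField galQn) => /vlineP[q Dq].
  by rewrite -Da Dq rmorphZ_num rmorph1 mulr1 Crat_rat.
apply/fixedFieldP; first exact: memvf.
move=> nuQ _; have [nu Dnu] := gQnC nuQ; have [k ck Uk] := aut_pow_exists nu.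
apply: (fmorph_inj QnC); rewrite Dnu Da (char_aut_pow Uk (irr_char i) Gg).
exact/eqP/(implyP (fix_g k)).
Qed.

Lemma rational_irr_fixed k i : rational_irr i -> coprime k n -> fixes_irr k i.
Proof.
move=> /forall_inP Qi ck; apply/fixes_irrP => // g Gg.
by have [u Uk] := Qn_aut_exists ck; rewrite -(char_aut_pow Uk (irr_char i) Gg) aut_Crat ?Qi.
Qed.

Lemma irrat_irr_moved i :
  ~~ rational_irr i -> exists2 k : 'I_n, coprime k n & ~~ fixes_irr k i.
Proof.
case/forall_inPn=> g Gg; rewrite Crat_irr_pow // => /forallPn[k].
rewrite negb_imply => /andP[ck moved]; exists k => //.
by apply: contra moved => /(fixes_irrP _ ck)-> //; rewrite eqxx.
Qed.

Definition irrat_elt g := (g \in G) && ~~ [forall i : Iirr G, 'chi[G]_i g \in Crat].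

Lemma irrat_eltG g : irrat_elt g -> g \in G.
Proof. by case/andP. Qed.

Lemma irrat_elt_exists (i : Iirr G) : ~~ rational_irr i -> exists x, irrat_elt x.
Proof.
by case/forall_inPn=> x Gx nQx; exists x; rewrite /irrat_elt Gx; apply/forallPn; exists i.
Qed.

Lemma irrat_elt_class g : irrat_elt g -> (g ^: G)%g \in irrat_classes G.
Proof.
case/andP=> Gg nQg; rewrite inE mem_classes //= /rational_class.
apply: contra nQg => /forallP Qg; have [z Gz Dg] := repr_class G g.
by apply/forallP => i; rewrite -(cfunJ _ g Gz) -Dg Qg.
Qed.

Lemma rational_elt_fixed k g : g \in G -> ~~ irrat_elt g -> coprime k n ->
  (g ^+ k)%g \in (g ^: G)%g.
Proof.
rewrite /irrat_elt => Gg; rewrite Gg negbK => /forallP Qg ck.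
have [u Uk] := Qn_aut_exists ck; apply/eq_irr_mem_classP => // i.
by rewrite -(char_aut_pow Uk (irr_char i) Gg) aut_Crat.
Qed.

Lemma irrat_elt_moved g : irrat_elt g ->
  exists2 k, coprime k n & (g ^+ k)%g \notin (g ^: G)%g.
Proof.
case/andP=> Gg /forallPn[i]; rewrite Crat_irr_pow // => /forallPn[k].
rewrite negb_imply => /andP[ck moved]; exists k => //.
by apply: contra moved => /(eq_irr_mem_classP _ Gg)->.
Qed.

Lemma irrat_eltX k g : irrat_elt g -> coprime k n -> irrat_elt (g ^+ k)%g.
Proof.
case/andP=> Gg /forallPn[i nQ] ck; have [u Uk] := Qn_aut_exists ck.
rewrite /irrat_elt groupX //=; apply/forallPn; exists i.
by rewrite -(char_aut_pow Uk (irr_char i) Gg) Crat_aut.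
Qed.

Lemma memJ_classG x y z : z \in G -> ((y ^ z)%g \in (x ^: G)%g) = (y \in (x ^: G)%g).
Proof. by move=> Gz; rewrite memJ_norm // (subsetP (class_norm x G)). Qed.

Lemma card_cent1_class x : x \in G -> (#|'C_G[x]%g| * #|(x ^: G)%g|)%N = n.
Proof. by move=> Gx; rewrite -index_cent1 Lagrange ?subsetIl. Qed.

(* Both sides equal |G|^-1 * \sum_(g in G) \sum_i 'chi_i (g ^+ k) * ('chi_i g)^*, by the
   second orthogonality relation. *)
Lemma card_fixes_irr k : coprime k n ->
  #|[set i | fixes_irr k i]| = #|[set K in classes G | (repr K ^+ k)%g \in K]|.
Proof.
move=> ck; apply/eqP; rewrite -(@eqr_nat algC); apply/eqP.
transitivity (\sum_i '['chi[G]_(pow_Iirr k i), 'chi_i]).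
  rewrite -sum1_card natr_sum big_mkcond /=; apply: eq_bigr => i _.
  by rewrite cfdot_irr inE /fixes_irr; case: eqP.
under eq_bigr => i _ do rewrite cfdotE.
rewrite -mulr_sumr exchange_big /=.
pose F g := #|'C_G[g ^+ k]%g|%:R *+ ((g ^+ k)%g \in (g ^: G)%g) : algC.
rewrite (eq_bigr F) => [|g Gg]; last first.
  rewrite /F -second_orthogonality_relation //.
  by apply: eq_bigr => i _; rewrite pow_IirrE.
rewrite sum_by_classes => [|g z Gg Gz]; last first.
  by rewrite /F -conjXg classGidl // memJ_classG // cent1J -{1}(conjGid Gz) -conjIg cardJg.
rewrite mulr_sumr -[in X in _ = X]sum1_card natr_sum [RHS]big_mkcond [LHS]big_mkcond /=.
apply: eq_bigr => K _; rewrite inE; case KG: (K \in classes G) => //=.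
have /repr_classesP[Gr DK] := KG; rewrite /F -DK.
case: ifP => [rkK|]; last by rewrite mulr0n !mulr0.
have {1}-> : K = (repr K ^+ k ^: G)%g by rewrite {1}DK; apply/esym/class_eqP; rewrite -DK.
rewrite mulr1n -natrM mulnC card_cent1_class ?groupX //.
by rewrite mulVf // pnatr_eq0 -lt0n cardG_gt0.
Qed.

Lemma memX_class x y k : y \in (x ^: G)%g -> (y ^+ k)%g \in (x ^+ k ^: G)%g.
Proof. by case/imsetP=> z Gz ->; rewrite -conjXg memJ_class. Qed.

Lemma expg_totient x c : x \in G -> coprime c n -> (x ^+ (c ^ totient n))%g = x.
Proof.
move=> Gx cc; have xn1 := expg_cardG Gx.
by rewrite -(expg_mod _ xn1) Euler_exp_totient // expg_mod ?expg1.
Qed.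

Definition moves_irrat_classes k :=
  coprime k n && ~~ [exists g, irrat_elt g && ((g ^+ k)%g \in (g ^: G)%g)].

Lemma moves_irrat_classesP k :
  reflect (coprime k n /\ forall g, irrat_elt g -> (g ^+ k)%g \notin (g ^: G)%g)
          (moves_irrat_classes k).
Proof.
apply: (iffP andP) => [[ck /existsPn nfix] | [ck nfix]]; split=> //.
  by move=> g Ig; have := nfix g; rewrite Ig.
by apply/existsPn => g; rewrite negb_and; case: (boolP (irrat_elt g)) => // /nfix.
Qed.

Hypothesis small : (#|irrat_classes G| <= 5)%N.

Section IrrationalBlocks.

Variables (T : eqType) (phi : gT -> T).
Hypothesis phiJ : {in G &, forall x z, phi (x ^ z)%g = phi x}.

Definition irrat_block x := [set K in irrat_classes G | phi (repr K) == phi x].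

Lemma mem_irrat_block x y : irrat_elt y ->
  ((y ^: G)%g \in irrat_block x) = (phi y == phi x).
Proof.
move=> Iy; have /andP[Gy _] := Iy; rewrite inE irrat_elt_class //=.
by have [z Gz ->] := repr_class G y; rewrite phiJ.
Qed.

Lemma irrat_block_gt1 x y : irrat_elt x -> irrat_elt y -> phi y = phi x ->
  y \notin (x ^: G)%g -> (1 < #|irrat_block x|)%N.
Proof.
move=> Ix Iy Dy xGy; have sub : [set (x ^: G)%g; (y ^: G)%g] \subset irrat_block x.
  by apply/subsetP => K /set2P[]->; rewrite mem_irrat_block ?Dy.
apply: leq_trans (subset_leq_card sub); rewrite cards2 ltnS lt0b.
by apply: contra xGy => /eqP->; apply: class_refl.
Qed.

Lemma irrat_blocksI x y : phi x != phi y -> irrat_block x :&: irrat_block y = set0.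
Proof.
move=> nxy; apply/eqP; apply: contraR nxy => /set0Pn[K]; rewrite !inE.
by case/and3P=> /andP[_ /eqP <-] _ /eqP ->.
Qed.

Lemma at_most_two_irrat_blocks x y z :
  (1 < #|irrat_block x|)%N -> (1 < #|irrat_block y|)%N -> (1 < #|irrat_block z|)%N ->
  [|| phi x == phi y, phi x == phi z | phi y == phi z].
Proof.
move=> bx b_y bz; apply: contraTT small; rewrite !negb_or -ltnNge => /and3P[nxy nxz nyz].
set B := irrat_block x :|: irrat_block y :|: irrat_block z.
have sBI : B \subset irrat_classes G.
  by rewrite !subUset /irrat_block !setIdE !subsetIl.
have cardB : #|B| = (#|irrat_block x| + #|irrat_block y| + #|irrat_block z|)%N.
  have cardsU0 (A C : {set {set gT}}) : A :&: C = set0 -> #|A :|: C| = (#|A| + #|C|)%N.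
    by move=> AC0; rewrite -cardsUI AC0 cards0 addn0.
  by rewrite /B cardsU0 ?cardsU0 ?irrat_blocksI // setIUl !irrat_blocksI ?setU0.
by apply: leq_trans (subset_leq_card sBI); rewrite cardB (leq_add (leq_add bx b_y) bz).
Qed.

End IrrationalBlocks.

(* Exponents are taken in 'I_n since g ^+ s only depends on s modulo |G| (class_stab_expg). *)
Definition class_stab x := [set s : 'I_n | (x ^+ s)%g \in (x ^: G)%g].

Lemma class_stabJ : {in G &, forall x z, class_stab (x ^ z)%g = class_stab x}.
Proof.
by move=> x z Gx Gz; apply/setP => s; rewrite !inE -conjXg classGidl // memJ_classG.
Qed.

Lemma class_stabX x c : x \in G -> coprime c n -> class_stab (x ^+ c)%g = class_stab x.
Proof.
move=> Gx cc; apply/setP => s; rewrite !inE; apply/idP/idP; last first.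
  by move/(memX_class c); rewrite -!expgM mulnC.
move/(memX_class (c ^ (totient n).-1)); rewrite -!expgM mulnCA -expnS.
by rewrite prednK ?totient_gt0 ?cardG_gt0 // expgM !expg_totient ?groupX.
Qed.

Lemma class_stab_expg x y a : x \in G -> y \in G -> class_stab x = class_stab y ->
  ((x ^+ a)%g \in (x ^: G)%g) = ((y ^+ a)%g \in (y ^: G)%g).
Proof.
move=> Gx Gy /setP/(_ (Ordinal (ltn_pmod a (cardG_gt0 G)))).
by rewrite !inE /= !expg_mod ?expg_cardG.
Qed.

Lemma memX_class_cancel x a b : (x ^+ b)%g \in (x ^: G)%g ->
  (x ^+ (b * a)%N)%g \in (x ^: G)%g -> (x ^+ a)%g \in (x ^: G)%g.
Proof.
move=> /(memX_class a); rewrite -expgM => /class_eqP E1 /class_eqP E2.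
by rewrite -E2 E1 class_refl.
Qed.

Lemma class_stab_two_values x y z : irrat_elt x -> irrat_elt y -> irrat_elt z ->
  [|| class_stab x == class_stab y, class_stab x == class_stab z
    | class_stab y == class_stab z].
Proof.
have gt1 g : irrat_elt g -> (1 < #|irrat_block class_stab g|)%N.
  move=> Ig; have [c cc ncg] := irrat_elt_moved Ig.
  have stab_gc := class_stabX (irrat_eltG Ig) cc.
  exact: @irrat_block_gt1 _ class_stab class_stabJ _ _ Ig (irrat_eltX Ig cc) stab_gc ncg.
move=> Ix Iy Iz.
exact: @at_most_two_irrat_blocks _ class_stab _ _ _ (gt1 x Ix) (gt1 y Iy) (gt1 z Iz).
Qed.

(* If neither a (moving x1) nor b (moving x2) works, then a fixes x2, so the Galois orbits of
   x1 and x2 differ and are the only ones; b fixes some x3, hence the orbit of x1, and then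
   a * b moves every irrational class. *)
Lemma moves_irrat_classes_exists : exists k, moves_irrat_classes k.
Proof.
have [x1 Ix1 | no_irrat] := pickP irrat_elt; last first.
  by exists 1%N; apply/moves_irrat_classesP; split=> [|g]; rewrite ?coprime1n ?no_irrat.
have stabE x y a : irrat_elt x -> irrat_elt y -> class_stab y = class_stab x ->
    ((y ^+ a)%g \in (y ^: G)%g) = ((x ^+ a)%g \in (x ^: G)%g).
  by move=> Ix Iy; apply: class_stab_expg; apply: irrat_eltG.
have [a ca na] := irrat_elt_moved Ix1.
have [ga|] := boolP (moves_irrat_classes a); first by exists a.
rewrite /moves_irrat_classes ca negbK => /existsP[x2 /andP[Ix2 fa2]].
have [b cb nb] := irrat_elt_moved Ix2.
have [gb|] := boolP (moves_irrat_classes b); first by exists b.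
rewrite /moves_irrat_classes cb negbK => /existsP[x3 /andP[Ix3 fb3]].
have n12 : class_stab x1 != class_stab x2.
  by apply: contraNneq na => /(stabE _ _ a Ix2 Ix1)->.
have cover y : irrat_elt y -> class_stab y = class_stab x1 \/ class_stab y = class_stab x2.
  move=> Iy; case/or3P: (class_stab_two_values Ix1 Ix2 Iy) => /eqP E.
  - by rewrite E eqxx in n12.
  - by left.
  - by right.
have fb1 : (x1 ^+ b)%g \in (x1 ^: G)%g.
  case: (cover x3 Ix3) => [/(stabE _ _ b Ix1 Ix3) | /(stabE _ _ b Ix2 Ix3)] E.
    by rewrite -E.
  by rewrite -E fb3 in nb.
exists (a * b)%N; apply/moves_irrat_classesP.
split=> [|y Iy]; first by rewrite coprimeMl ca cb.
apply/negP => fy.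
case: (cover y Iy) => [/(stabE _ _ (a * b)%N Ix1 Iy) | /(stabE _ _ (a * b)%N Ix2 Iy)] E.
  by case/negP: na; apply: memX_class_cancel fb1 _; rewrite mulnC -E.
by case/negP: nb; apply: memX_class_cancel fa2 _; rewrite -E.
Qed.

Definition pow_stable k (f : 'CF(G)) :=
  [/\ {in G, forall g, ~~ irrat_elt g -> f g = 0},
      {in G, forall g, f (g ^+ k)%g = f g} & '[f, 1] = 0].

Section PowStable.

Variable k : nat.
Hypothesis gk : moves_irrat_classes k.

Lemma pow_stable_two_values f x y z : pow_stable k f ->
  irrat_elt x -> irrat_elt y -> irrat_elt z -> [|| f x == f y, f x == f z | f y == f z].
Proof.
case=> _ fk _; have fJ : {in G &, forall x z, f (x ^ z)%g = f x} by move=> ? ? _; apply: cfunJ.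
have/moves_irrat_classesP[ck nfix] := gk.
have gt1 g : irrat_elt g -> (1 < #|irrat_block f g|)%N.
  by move=> Ig; apply: irrat_block_gt1 (irrat_eltX Ig ck) (fk g (irrat_eltG Ig)) (nfix g Ig).
by move=> Ix Iy Iz; apply: at_most_two_irrat_blocks (gt1 x Ix) (gt1 y Iy) (gt1 z Iz).
Qed.

(* If f y != 0, then f only takes the values 0 and f y on G, so its sum over G cannot vanish. *)
Lemma pow_stable_eq0 f x : pow_stable k f -> irrat_elt x -> f x = 0 -> f = 0.
Proof.
move=> fS Ix fx0; have [f0 _ f1] := fS.
apply/cfunP => y; rewrite cfunE; apply/eqP/negPn/negP => nzy.
have Gy : y \in G by apply: contraR nzy => /cfun0->; rewrite eqxx.
have Iy : irrat_elt y by apply: contraR nzy => /(f0 _ Gy)->; rewrite eqxx.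
have fG g : g \in G -> f g = f y *+ (f g == f y).
  move=> Gg; case: eqP => [-> | nfy]; first by rewrite mulr1n.
  rewrite mulr0n; have [Ig | /(f0 _ Gg)//] := boolP (irrat_elt g).
  case/or3P: (pow_stable_two_values fS Ix Iy Ig) => /eqP.
  - by rewrite fx0 => fy0; rewrite -fy0 eqxx in nzy.
  - by rewrite fx0.
  - by move=> fyg; case: nfy.
have := sum_cfun_eq0 f1; rewrite (eq_bigr _ fG) sumrMnr => /eqP.
by rewrite mulrn_eq0 (negbTE nzy) (bigD1 y) //= eqxx.
Qed.

Lemma pow_stable_proportional f f' x : pow_stable k f -> pow_stable k f' ->
  irrat_elt x -> f x != 0 -> f' = (f' x / f x) *: f.
Proof.
move=> [f0 fk f1] [f'0 f'k f'1] Ix nzfx; apply/eqP; rewrite -subr_eq0; apply/eqP.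
apply: (pow_stable_eq0 _ Ix); last by rewrite !cfunE divfK ?subrr.
split=> [g Gg Qg | g Gg |].
- by rewrite !cfunE (f0 g) ?(f'0 g) // mulr0 subr0.
- by rewrite !cfunE (fk g) ?(f'k g).
- by rewrite cfdotBl cfdotZl f1 f'1 mulr0 subr0.
Qed.

Lemma pow_stable_irr_diff i s : ~~ rational_irr i -> fixes_irr k i -> coprime s n ->
  pow_stable k ('chi_i - 'chi_(pow_Iirr s i)).
Proof.
have /andP[ck _] := gk; move=> nQi /(fixes_irrP _ ck) fik cs; split=> [g Gg Qg | g Gg |].
- by rewrite !cfunE pow_IirrE // (cfun_class _ (rational_elt_fixed Gg Qg cs)) subrr.
- by rewrite !cfunE !pow_IirrE ?groupX // fik // expgAC fik ?groupX.
have i0 : i != 0 by apply: contraNneq nQi => ->; apply: rational_irr0.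
have si0 : pow_Iirr s i != 0 by rewrite -(pow_Iirr0 cs) (inj_eq (pow_Iirr_inj cs)).
by rewrite cfdotBl -irr0 !cfdot_irr (negbTE i0) (negbTE si0) subrr.
Qed.

End PowStable.

Definition irr_partner i :=
  if [pick s : 'I_n | coprime s n && ~~ fixes_irr s i] is Some s then pow_Iirr s i else i.

Definition partner_diff i := 'chi[G]_i - 'chi_(irr_partner i).

Definition good_fixed k i := [&& moves_irrat_classes k, ~~ rational_irr i & fixes_irr k i].

Lemma aut_partner_diff u s i g : aut_pow u s -> g \in G ->
  u (partner_diff i g) = partner_diff i (g ^+ s)%g.
Proof. by move=> Us Gg; rewrite !cfunE rmorphB /= !(char_aut_pow Us (irr_char _) Gg). Qed.

Section GoodFixed.

Variables (k : nat) (i : Iirr G).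
Hypothesis kfix : good_fixed k i.

Let gk : moves_irrat_classes k. Proof. by case/and3P: kfix. Qed.
Let nQi : ~~ rational_irr i. Proof. by case/and3P: kfix. Qed.
Let fik : fixes_irr k i. Proof. by case/and3P: kfix. Qed.

Local Notation j := (irr_partner i).
Local Notation d := (partner_diff i).

Lemma irr_partner_moved : exists2 h, coprime h n /\ ~~ fixes_irr h i & j = pow_Iirr h i.
Proof.
rewrite /irr_partner; case: pickP => [h /andP[ch nh] | none]; first by exists h.
by have [h ch nh] := irrat_irr_moved nQi; have := none h; rewrite ch nh.
Qed.

Lemma partner_diff_stable : pow_stable k d.
Proof.
rewrite /partner_diff; have [h [ch _] ->] := irr_partner_moved.
exact: pow_stable_irr_diff.
Qed.

Lemma irr_partner_neq : j != i.
Proof. by have [h [_ nh] ->] := irr_partner_moved. Qed.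

Lemma partner_diff_neq0 x : irrat_elt x -> d x != 0.
Proof.
move=> Ix; apply/eqP => dx0; have /eqP := pow_stable_eq0 gk partner_diff_stable Ix dx0.
by rewrite subr_eq0 => /eqP/irr_inj ij; move: irr_partner_neq; rewrite -ij eqxx.
Qed.

Lemma pow_Iirr_partner s : coprime s n -> ~~ fixes_irr s i -> pow_Iirr s i = j.
Proof.
move=> cs ns; apply/eqP; apply: contraR ns => nsj;
have [x Ix] := irrat_elt_exists nQi.
have := pow_stable_proportional gk partner_diff_stable
  (pow_stable_irr_diff gk nQi fik cs) Ix (partner_diff_neq0 Ix).
set a := (_ / _) => Ds; have a0 : a = 0.
  have := congr1 (cfdot^~ 'chi_j) Ds; rewrite /= cfdotZl !cfdotBl !cfdot_irr eqxx.
  rewrite (negbTE nsj) eq_sym (negbTE irr_partner_neq) subrr => /esym/eqP.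
  by rewrite sub0r mulrN1 oppr_eq0 => /eqP.
move: Ds; rewrite a0 scale0r => /eqP; rewrite subr_eq0 => /eqP/irr_inj Di.
by rewrite /fixes_irr -Di.
Qed.

Lemma fixes_irr_sqr s : coprime s n -> fixes_irr (s * s)%N i.
Proof.
move=> cs; have css : coprime (s * s)%N n by rewrite coprimeMl cs.
have [fs | ns] := boolP (fixes_irr s i); first by rewrite fixes_irrMl.
apply: contraT => nss; case/negP: irr_partner_neq.
have Ej := pow_Iirr_partner cs ns; have Ej2 := pow_Iirr_partner css nss.
by rewrite -(inj_eq (pow_Iirr_inj cs)) -{1}Ej -pow_IirrM // Ej2 Ej.
Qed.

Lemma partner_diff_expg s g : coprime s n -> g \in G ->
  d (g ^+ s)%g = (-1) ^+ (~~ fixes_irr s i) * d g.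
Proof.
move=> cs Gg; have [fs | ns] := boolP (fixes_irr s i).
  rewrite /partner_diff; have [h [ch _] ->] := irr_partner_moved.
  move/(fixes_irrP _ cs): fs => fs.
  by rewrite mul1r !cfunE !pow_IirrE ?groupX // expgAC !fs ?groupX.
have Esj : pow_Iirr s j = i.
  by rewrite -(pow_Iirr_partner cs ns) -pow_IirrM // (eqP (fixes_irr_sqr cs)).
by rewrite mulN1r !cfunE opprB -!(pow_IirrE _ cs Gg) Esj (pow_Iirr_partner cs ns).
Qed.

Lemma moves_irr_good s : coprime s n -> ~~ fixes_irr s i -> moves_irrat_classes s.
Proof.
move=> cs ns; apply/moves_irrat_classesP; split=> // y Iy; apply/negP => fy.
have := partner_diff_expg cs (irrat_eltG Iy); rewrite (cfun_class _ fy) (negbTE ns) mulN1r.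
by move/esym/eqP; rewrite eqNr (negbTE (partner_diff_neq0 Iy)).
Qed.

Lemma partner_diff_pm x y : irrat_elt x -> irrat_elt y -> d y = d x \/ d y = - d x.
Proof.
move=> Ix Iy; have [h [ch nh] _] := irr_partner_moved.
have Dxh : d (x ^+ h)%g = - d x by rewrite partner_diff_expg ?irrat_eltG // (negbTE nh) mulN1r.
case/or3P: (pow_stable_two_values gk partner_diff_stable Ix (irrat_eltX Ix ch) Iy) => /eqP.
- by rewrite Dxh => /esym/eqP; rewrite eqNr (negbTE (partner_diff_neq0 Ix)).
- by left.
- by rewrite Dxh; right.
Qed.

Lemma partner_diff_norm x : irrat_elt x ->
  `|d x| ^+ 2 = 2 * n%:R / #|[set g | irrat_elt g]|%:R.
Proof.
move=> Ix; have N0 : #|[set g | irrat_elt g]|%:R != 0 :> algC.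
  by rewrite pnatr_eq0 -lt0n; apply/card_gt0P; exists x; rewrite inE.
apply: (canRL (mulfK N0)).
have : '[d] = 2.
  by rewrite cfnormB !cfnorm_irr cfdot_irr eq_sym (negbTE irr_partner_neq) conjC0 addr0 subr0.
rewrite cfdotE big_mkcond /=.
rewrite (eq_bigr (fun g => if irrat_elt g then `|d x| ^+ 2 else 0)) => [|g _]; last first.
  have [Gg | nGg] := boolP (g \in G); last first.
    by case: ifP => // /irrat_eltG; rewrite (negbTE nGg).
  rewrite -normCK; have [Ig | Qg] := boolP (irrat_elt g).
    by case: (partner_diff_pm Ix Ig) => ->; rewrite ?normrN.
  by have [-> // _ _] := partner_diff_stable; rewrite normr0 expr0n.
rewrite -big_mkcond sumr_const => Dd.
rewrite [2 * _]mulrC -Dd mulVKf ?neq0CG // mulr_natr.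
by congr (_ *+ _); apply: eq_card => g; rewrite inE.
Qed.

Lemma partner_diff_sqr x : irrat_elt x -> exists b : bool, d x ^+ 2 = (-1) ^+ b * `|d x| ^+ 2.
Proof.
move=> Ix; have [s cs Us] := aut_pow_exists (Num.conj : {rmorphism algC -> algC}).
exists (~~ fixes_irr s i).
rewrite normCK (aut_partner_diff _ Us (irrat_eltG Ix)) partner_diff_expg ?irrat_eltG //.
by rewrite mulrCA signrMK expr2.
Qed.

End GoodFixed.

Definition same_irr_stab a b := forall s, coprime s n -> fixes_irr s a = fixes_irr s b.

Lemma same_irr_stab_of_sign k a b s x : good_fixed k b -> irrat_elt x -> coprime s n ->
    partner_diff b (x ^+ s)%g = (-1) ^+ (~~ fixes_irr s a) * partner_diff b x ->
  fixes_irr s a = fixes_irr s b.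
Proof.
move=> bfix Ix cs; rewrite (partner_diff_expg bfix cs (irrat_eltG Ix)).
by move/(mulIf (partner_diff_neq0 bfix Ix))/signr_inj/negb_inj.
Qed.

Lemma good_fixed_same_stab k a b : good_fixed k a -> good_fixed k b -> same_irr_stab a b.
Proof.
move=> afix bfix s cs; have /and3P[gk nQa _] := afix; have [x Ix] := irrat_elt_exists nQa.
have := pow_stable_proportional gk (partner_diff_stable afix) (partner_diff_stable bfix)
  Ix (partner_diff_neq0 afix Ix).
set c := _ / _ => Db; have Dby y : partner_diff b y = c * partner_diff a y by rewrite Db cfunE.
apply: (same_irr_stab_of_sign bfix Ix cs).
by rewrite !Dby (partner_diff_expg afix cs (irrat_eltG Ix)) mulrCA.
Qed.

Lemma sqr_eq_same_stab ka a kb b x : good_fixed ka a -> good_fixed kb b -> irrat_elt x ->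
  partner_diff a x ^+ 2 = partner_diff b x ^+ 2 -> same_irr_stab a b.
Proof.
move=> afix bfix Ix /eqP; rewrite eqf_sqr => Dab s cs.
have {Dab} [c Db] : exists c : bool, partner_diff b x = (-1) ^+ c * partner_diff a x.
  case/orP: Dab => /eqP->; first by exists false; rewrite mul1r.
  by exists true; rewrite mulN1r opprK.
have [u Us] := Qn_aut_exists cs; have Gx := irrat_eltG Ix.
apply: (same_irr_stab_of_sign bfix Ix cs).
rewrite -(aut_partner_diff _ Us Gx) Db rmorphM rmorph_sign (aut_partner_diff _ Us Gx).
by rewrite (partner_diff_expg afix cs Gx) mulrCA.
Qed.

(* Each partner_diff m x squares to +- 2|G| / #irrational elements, so two of the three
   squares agree. *)
Lemma three_good_fixed_same_stab k1 i1 k2 i2 k3 i3 :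
  good_fixed k1 i1 -> good_fixed k2 i2 -> good_fixed k3 i3 ->
  [\/ same_irr_stab i1 i2, same_irr_stab i1 i3 | same_irr_stab i2 i3].
Proof.
move=> f1 f2 f3; have /and3P[_ nQ1 _] := f1; have [x Ix] := irrat_elt_exists nQ1.
have [b1 D1] := partner_diff_sqr f1 Ix; rewrite (partner_diff_norm f1 Ix) in D1.
have [b2 D2] := partner_diff_sqr f2 Ix; rewrite (partner_diff_norm f2 Ix) in D2.
have [b3 D3] := partner_diff_sqr f3 Ix; rewrite (partner_diff_norm f3 Ix) in D3.
have : [|| b1 == b2, b1 == b3 | b2 == b3] by case: b1 b2 b3 {D1 D2 D3} => [] [] [].
case/or3P=> /eqP Eb.
- by apply: Or31; apply: (sqr_eq_same_stab f1 f2 Ix); rewrite D1 D2 Eb.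
- by apply: Or32; apply: (sqr_eq_same_stab f1 f3 Ix); rewrite D1 D3 Eb.
- by apply: Or33; apply: (sqr_eq_same_stab f2 f3 Ix); rewrite D2 D3 Eb.
Qed.

(* i1 is fixed by k1 and moved by h1, i2 is fixed by h1 and i3 by h1 * k1; each coincidence
   of Galois stabilisers among them is contradictory. *)
Lemma good_exp_fixing_no_irrat_exists :
  exists2 k, moves_irrat_classes k & forall i, ~~ rational_irr i -> ~~ fixes_irr k i.
Proof.
have fixes_noneP k : moves_irrat_classes k ->
    (forall i, ~~ rational_irr i -> ~~ fixes_irr k i) \/ exists i, good_fixed k i.
  move=> gk; have [/existsP[i /andP[nQi fki]] | /existsPn nfix] :=
    boolP [exists i, ~~ rational_irr i && fixes_irr k i].
    by right; exists i; rewrite /good_fixed gk nQi fki.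
  by left=> i nQi; have := nfix i; rewrite nQi.
have [k1 g1] := moves_irrat_classes_exists.
case: (fixes_noneP _ g1) => [|[i1 f1]]; first by exists k1.
have /and3P[/andP[ck1 _] nQ1 fk1] := f1; have [h1 ch1 nh1] := irrat_irr_moved nQ1.
have gh1 := moves_irr_good f1 ch1 nh1.
case: (fixes_noneP _ gh1) => [|[i2 f2]]; first by exists h1.
have ck1h1 : coprime (h1 * k1)%N n by rewrite coprimeMl ch1 ck1.
have nk1h1 : ~~ fixes_irr (h1 * k1)%N i1 by rewrite fixes_irrMl.
have gk1h1 := moves_irr_good f1 ck1h1 nk1h1.
case: (fixes_noneP _ gk1h1) => [|[i3 f3]]; first by exists (h1 * k1)%N.
have /and3P[_ _ fh2] := f2; have /and3P[_ _ fk3] := f3.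
case: (three_good_fixed_same_stab f1 f2 f3) => [S12 | S13 | S23].
- by move: (S12 _ ch1); rewrite fh2 (negbTE nh1).
- by move: (S13 _ ck1h1); rewrite fk3 (negbTE nk1h1).
have f2' : good_fixed k1 i2.
  rewrite /good_fixed g1 -(fixes_irrMl ch1 ck1 fh2) mulnC S23 // fk3 andbT.
  by case/and3P: f2.
by move: (good_fixed_same_stab f1 f2' ch1); rewrite fh2 (negbTE nh1).
Qed.

End GaloisPowers.

Theorem theoremA (gT : finGroupType) (G : {group gT}) :
  (#|irrat_classes G| <= 5)%N -> #|rat_classes G| = #|rat_irr G|.
Proof.
move=> small; have [k gk nfix] := good_exp_fixing_no_irrat_exists small.
have /moves_irrat_classesP[ck nfixK] := gk.
have -> : rat_irr G = [set i | fixes_irr k i].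
  apply/setP => i; rewrite !inE; apply/idP/idP => [Qi | fi].
    exact: rational_irr_fixed.
  by apply: contraTT fi; apply: nfix.
have -> : rat_classes G = [set K in classes G | (repr K ^+ k)%g \in K].
  apply/setP => K; rewrite !inE; case KG: (K \in classes G) => //=.
  have /repr_classesP[Gr DK] := KG.
  have -> : rational_class G K = ~~ irrat_elt G (repr K) by rewrite /irrat_elt Gr negbK.
  have -> : ((repr K ^+ k)%g \in K) = ((repr K ^+ k)%g \in (repr K ^: G)%g) by rewrite -DK.
  apply/idP/idP => [Qr | ]; first exact: rational_elt_fixed.
  by apply: contraTN => /nfixK.
by rewrite card_fixes_irr.
Qed.
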